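(* Let $T>0$ and let $\mathcal{H}$ be a dense subset of $C_K(\mathbb{R})$. Let $z=\{z(u,t),\ u\in[0,1],\ t\in(0,T]\}\in D([0,1],C(0,T])$ satisfy $z(u,t)\le z(v,t)$ for $u<v$, $t\in(0,T]$, and suppose that for all $\varphi\in\mathcal{H}$, $$\int_0^1\varphi(z(u,t))du\to\int_0^1\varphi(u)du,\quad t\to0.$$ Then $\lim_{t\to0}z(u,t)=u$ for each $u\in(0,1)$. Moreover, if $\lim_{t\to0}z(0,t)=0$ and $\lim_{t\to0}z(1,t)=1$, then the extension of $z$ to $[0,1]\times[0,T]$ given by $z(u,0)=u$ belongs to $D([0,1],C[0,T])$.
   Context: $C_K(\mathbb{R})$ is the class of continuous functions on $\mathbb{R}$ with compact support (density is with respect to uniform convergence). $C(0,T]$ is the space of continuous functions on $(0,T]$ with the metric of uniform convergence on compact subsets of $(0,T]$, $C[0,T]$ has the uniform metric, and $D([0,1],E)$ is the Skorohod space of càdlàg maps from $[0,1]$ to $E$. *)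

From HB Require Import structures.
From mathcomp Require Import all_boot all_order all_algebra.
From mathcomp Require Import all_classical all_reals all_analysis.
Set Implicit Arguments. Unset Strict Implicit. Unset Printing Implicit Defensive.
Import Order.TTheory GRing.Theory Num.Theory.
Import numFieldNormedType.Exports.
Local Open Scope classical_set_scope.
Local Open Scope ring_scope.

Definition CK (R : realType) (f : R -> R) : Prop :=
  continuous f /\ compact (closure (f @^-1` [set~ 0])).

Definition dense_in_CK (R : realType) (H : set (R -> R)) : Prop :=
  H `<=` @CK R /\
  forall f, CK f -> forall e : R, 0 < e ->
    exists2 h, H h & forall x, `|f x - h x| < e.

(* z : [0,1] x (0,T] -> R belongs to D([0,1], C(0,T]).  C(0,T] carries the
   metric of uniform convergence on compact subsets of (0,T]; every compact
   subset of (0,T] lies in some [a,T] with 0 < a <= T, so convergence in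
   C(0,T] is uniform convergence on each [a,T]. *)
Definition in_D_C0T (R : realType) (T : R) (z : R -> R -> R) : Prop :=
  (forall u, 0 <= u <= 1 -> {within `]0, T], continuous (z u)}) /\
  (forall u, 0 <= u < 1 -> forall a, 0 < a <= T -> forall e : R, 0 < e ->
     exists2 d : R, 0 < d & forall v, u < v < u + d -> v <= 1 ->
       forall t, a <= t <= T -> `|z v t - z u t| < e) /\
  (forall u, 0 < u <= 1 -> exists g : R -> R,
     {within `]0, T], continuous g} /\
     forall a, 0 < a <= T -> forall e : R, 0 < e ->
       exists2 d : R, 0 < d & forall v, u - d < v < u -> 0 <= v ->
         forall t, a <= t <= T -> `|z v t - g t| < e).

Definition in_D_CT (R : realType) (T : R) (z : R -> R -> R) : Prop :=
  (forall u, 0 <= u <= 1 -> {within `[0, T], continuous (z u)}) /\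
  (forall u, 0 <= u < 1 -> forall e : R, 0 < e ->
     exists2 d : R, 0 < d & forall v, u < v < u + d -> v <= 1 ->
       forall t, 0 <= t <= T -> `|z v t - z u t| < e) /\
  (forall u, 0 < u <= 1 -> exists g : R -> R,
     {within `[0, T], continuous g} /\
     forall e : R, 0 < e ->
       exists2 d : R, 0 < d & forall v, u - d < v < u -> 0 <= v ->
         forall t, 0 <= t <= T -> `|z v t - g t| < e).

Definition ext0 (R : realType) (z : R -> R -> R) : R -> R -> R :=
  fun u t => if t == 0 then u else z u t.

From HB Require Import structures.
From mathcomp Require Import all_boot all_order all_algebra.
From mathcomp Require Import all_classical all_reals all_analysis.
From mathcomp Require Import measurable_realfun lra.
Set Implicit Arguments.
Unset Strict Implicit.
Unset Printing Implicit Defensive.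
Import Order.TTheory GRing.Theory Num.Theory.
Import numFieldNormedType.Exports.
Local Open Scope classical_set_scope.
Local Open Scope ring_scope.

(* For 0 < u < 1, suppose z(u,t) >= u + e. By monotonicity every v >= u is then
   sent beyond u + e, so a continuous bump equal to 1 on [0, u + e/2] and vanishing
   from u + e on has integral at most u against z(.,t), whereas against the
   identity its integral exceeds u. Density of H in C_K(R) extends the assumed
   convergence of integrals to such bumps, hence this fails for all small t; the
   lower bound is symmetric.
   Once z(u,t) -> u at every u in [0,1], monotonicity upgrades this to uniform
   convergence on [0,1] (compare with a finite grid). Uniform convergence is what
   glues z(u,0) = u to z: for t bounded away from 0 the Skorohod properties in
   C(0,T] apply, and for small t every z(v,t) is close to v. *)

Section UnitIntervalIntegrals.
Variable R : realType.
Local Notation mu := (@lebesgue_measure R).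
Local Notation I01 := (`[(0:R), 1]%classic : set R).

Lemma lebesgue_measure01 : mu I01 = 1%E.
Proof. by rewrite lebesgue_measure_itv /= lte_fin ltr01 oppr0 adde0. Qed.

Lemma bounded_integrable01 (g : R -> R) (M : R) : measurable_fun I01 g ->
  (forall x, I01 x -> `|g x| <= M) -> mu.-integrable I01 (EFin \o g).
Proof.
move=> mg gM; apply: measurable_bounded_integrable => //.
  by rewrite -[X in (X < _)%E]/(mu I01) lebesgue_measure01 ltry.
rewrite /bounded_near; near=> N => x /= Ix; apply: le_trans (gM x Ix) _.
by near: N; exact: nbhs_pinfty_ge (num_real M).
Unshelve. all: by end_near.
Qed.

Lemma Rintegral01_cst (c : R) : Rintegral mu I01 (fun _ => c) = c.
Proof. by rewrite Rintegral_cst // (_ : fine (mu I01) = 1) ?mulr1 // lebesgue_measure01. Qed.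

Lemma Rintegral01_indic_itv (x y : R) (b1 b2 : bool) : 0 <= x -> x < y -> y <= 1 ->
  Rintegral mu I01 (\1_[set` Interval (BSide b1 x) (BSide b2 y)] : R -> R) = y - x.
Proof.
move=> x0 xy y1; rewrite /Rintegral integral_indic // setIidl.
  by apply: eq_trans (congr1 fine (lebesgue_measure_itv _)) _; rewrite /= lte_fin xy.
move=> v /=; rewrite !in_itv /= => /andP[xv vy]; apply/andP; split.
  by apply: le_trans x0 _; case: b1 xv => /= [|/ltW].
by apply: le_trans y1; case: b2 vy => /= [/ltW|].
Qed.

Lemma le_Rintegral01 (g h : R -> R) (Mg Mh : R) :
  measurable_fun I01 g -> measurable_fun I01 h ->
  (forall x, `|g x| <= Mg) -> (forall x, `|h x| <= Mh) ->
  (forall x, I01 x -> g x <= h x) -> Rintegral mu I01 g <= Rintegral mu I01 h.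
Proof.
move=> mg mh gM hM gh; apply: le_Rintegral => //.
  exact: bounded_integrable01 mg (fun x _ => gM x).
exact: bounded_integrable01 mh (fun x _ => hM x).
Qed.

Lemma Rintegral01_dist_le (g h : R -> R) (M e : R) :
  measurable_fun I01 g -> measurable_fun I01 h ->
  (forall x, `|g x| <= M) -> (forall x, `|h x| <= M) ->
  (forall x, `|g x - h x| <= e) ->
  `|Rintegral mu I01 g - Rintegral mu I01 h| <= e.
Proof.
move=> mg mh gM hM ghe.
have gh_bound x : `|g x - h x| <= M + M := le_trans (ler_normB _ _) (lerD (gM x) (hM x)).
have mgh : measurable_fun I01 (g \- h) by exact: measurable_funB.
rewrite -RintegralB //; last 2 first.
- exact: bounded_integrable01 mg (fun x _ => gM x).
- exact: bounded_integrable01 mh (fun x _ => hM x).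
apply: le_trans (le_normr_Rintegral _ _) _ => //.
  exact: bounded_integrable01 mgh (fun x _ => gh_bound x).
rewrite -[e]Rintegral01_cst; apply: (@le_Rintegral01 _ _ (M + M) `|e|) => //.
- by apply: measurableT_comp; [exact: normr_measurable | exact: mgh].
- by move=> x; rewrite normr_id.
Qed.

Lemma measurable_fun_nondecreasing01 (g : R -> R) :
  (forall u v, 0 <= u -> u <= v -> v <= 1 -> g u <= g v) -> measurable_fun I01 g.
Proof.
move=> gmono; pose clamp (v : R) := Num.min 1 (Num.max 0 v).
have clamp01 v : 0 <= clamp v <= 1.
  by rewrite /clamp le_min ler01 le_max lexx ge_min lexx.
apply: (@eq_measurable_fun _ _ _ _ _ (g \o clamp)).
  move=> v /set_mem /=; rewrite in_itv /= => /andP[v0 v1].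
  by rewrite /clamp (max_idPr v0) (min_idPr v1).
apply: nondecreasing_measurable => // x y xy.
have /andP[x0 _] := clamp01 x; have /andP[_ y1] := clamp01 y.
by apply: gmono => //; rewrite /clamp le_min2 // le_max2.
Qed.

Lemma cvg_Rintegral01_comp_CK (F : set_system R) {FF : Filter F}
    (H : set (R -> R)) (z : R -> R -> R) (f : R -> R) (M : R) :
  dense_in_CK H -> (\forall t \near F, measurable_fun I01 (z^~ t)) ->
  (forall phi, H phi ->
     Rintegral mu I01 (fun u => phi (z u t)) @[t --> F] --> Rintegral mu I01 phi) ->
  CK f -> (forall x, `|f x| <= M) ->
  Rintegral mu I01 (fun u => f (z u t)) @[t --> F] --> Rintegral mu I01 f.
Proof.
move=> [HCK Hd] zm conv fCK fM; apply/cvgrPdist_lt => e e0.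
have e3 : 0 < e / 3 by rewrite divr_gt0.
have [phi Hphi fphi_lt] := Hd f fCK _ e3.
have mphi := continuous_measurable_fun (HCK _ Hphi).1.
have mf := continuous_measurable_fun fCK.1.
have fM' x : `|f x| <= M + e / 3 by rewrite (le_trans (fM x)) // lerDl ltW.
have phiM x : `|phi x| <= M + e / 3.
  by rewrite -[phi x](subrKC (f x)) (le_trans (ler_normD _ _)) // distrC lerD // ltW.
have fphi x : `|f x - phi x| <= e / 3 := ltW (fphi_lt x).
have dist_f := Rintegral01_dist_le (measurable_funTS mf) (measurable_funTS mphi) fM' phiM fphi.
have /cvgrPdist_lt /(_ _ e3) := conv phi Hphi.
apply: filterS2 zm => t mzt phi_close.
have := Rintegral01_dist_le (measurableT_comp mf mzt) (measurableT_comp mphi mzt)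
  (fun=> fM' _) (fun=> phiM _) (fun=> fphi _).
move: dist_f phi_close; rewrite !ler_norml !ltr_norml.
by move=> /andP[? ?] /andP[? ?] /andP[? ?]; apply/andP; split; lra.
Qed.

End UnitIntervalIntegrals.

Section Trapezoid.
Variable R : realType.

Definition trapezoid (a b c : R) (x : R) : R :=
  Num.min 1 (Num.max 0 (Num.min ((x - a) / c) ((b - x) / c))).

Lemma continuous_trapezoid a b c : continuous (trapezoid a b c).
Proof.
move=> x.
apply: (@continuous_min _ _ (fun=> 1)
  (fun x => Num.max 0 (Num.min ((x - a) / c) ((b - x) / c)))); first exact: cvg_cst.
apply: (@continuous_max _ _ (fun=> 0)
  (fun x => Num.min ((x - a) / c) ((b - x) / c))); first exact: cvg_cst.
apply: (@continuous_min _ _ (fun x => (x - a) / c) (fun x => (b - x) / c)).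
  by apply: cvgM; [apply: cvgB; [exact: cvg_id | exact: cvg_cst] | exact: cvg_cst].
by apply: cvgM; [apply: cvgB; [exact: cvg_cst | exact: cvg_id] | exact: cvg_cst].
Qed.

Lemma trapezoid_ge0 a b c x : 0 <= trapezoid a b c x.
Proof. by rewrite /trapezoid le_min ler01 le_max lexx. Qed.

Lemma trapezoid_le1 a b c x : trapezoid a b c x <= 1.
Proof. by rewrite /trapezoid ge_min lexx. Qed.

Lemma trapezoid_eq0 a b c x : 0 < c -> x <= a \/ b <= x -> trapezoid a b c x = 0.
Proof.
move=> c0 xab; rewrite /trapezoid (_ : Num.max 0 _ = 0) ?(min_idPr ler01) //.
apply/max_idPl; rewrite ge_min !pmulr_lle0 ?invr_gt0 // !subr_le0.
by case: xab => ->; rewrite ?orbT.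
Qed.

Lemma trapezoid_eq1 a b c x : 0 < c -> a + c <= x -> x <= b - c ->
  trapezoid a b c x = 1.
Proof.
move=> c0 acx xbc; have h : 1 <= Num.min ((x - a) / c) ((b - x) / c).
  by rewrite le_min !ler_pdivlMr // !mul1r; apply/andP; split; lra.
by rewrite /trapezoid (max_idPr (le_trans ler01 h)); exact/min_idPl.
Qed.

Lemma CK_trapezoid a b c : 0 < c -> CK (trapezoid a b c).
Proof.
move=> c0; split; first exact: continuous_trapezoid.
apply: (@subclosed_compact _ _ `[a, b]); [exact: closed_closure|exact: segment_compact|].
rewrite (closure_id `[a, b]).1; last exact: itv_closed.
apply: closureS => x /= fx; rewrite in_itv /=; apply/andP; split.
  by rewrite leNgt; apply/negP => xa; apply: fx; apply: trapezoid_eq0 => //; left; exact: ltW.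
by rewrite leNgt; apply/negP => xb; apply: fx; apply: trapezoid_eq0 => //; right; exact: ltW.
Qed.

End Trapezoid.

Section InteriorConvergence.
Variables (R : realType) (T : R) (H : set (R -> R)) (z : R -> R -> R).
Local Notation mu := (@lebesgue_measure R).
Local Notation I01 := (`[(0:R), 1]%classic : set R).
Hypotheses (T0 : 0 < T) (H_dense : dense_in_CK H).
Hypothesis z_mono : forall t, 0 < t <= T ->
  forall u v, 0 <= u -> u <= v -> v <= 1 -> z u t <= z v t.
Hypothesis z_cvg : forall phi, H phi ->
  Rintegral mu I01 (fun u => phi (z u t)) @[t --> 0^'+] --> Rintegral mu I01 phi.

Lemma eventually_not_of_mass_gap (f : R -> R) (A B : set R) (P : R -> Prop) :
  CK f -> (forall x, 0 <= f x <= 1) -> measurable A -> measurable B ->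
  (forall x, I01 x -> B x -> f x = 1) ->
  (forall t, 0 < t <= T -> P t -> forall v, I01 v -> ~ A v -> f (z v t) = 0) ->
  Rintegral mu I01 (\1_A : R -> R) < Rintegral mu I01 (\1_B : R -> R) ->
  \forall t \near 0^'+, ~ P t.
Proof.
move=> fCK f01 mA mB fB fA gap.
have f1 x : `|f x| <= 1 by have /andP[f0 f1] := f01 x; rewrite ger0_norm.
have ind1 (S : set R) x : `|\1_S x : R| <= 1.
  by rewrite indicE; case: (_ \in _); rewrite ?normr1 ?normr0.
have mf := continuous_measurable_fun fCK.1.
have near_meas : \forall t \near 0^'+, measurable_fun I01 (z^~ t).
  near=> t; apply: measurable_fun_nondecreasing01; apply: z_mono.
  by apply/andP; split; near: t; [exact: nbhs_right_gt | exact: nbhs_right_le].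
have lbB : Rintegral mu I01 (\1_B : R -> R) <= Rintegral mu I01 f.
  apply: (le_Rintegral01 _ _ (ind1 B) f1).
  - exact: measurable_indic.
  - exact: measurable_funTS.
  move=> x Ix; rewrite indicE; have /andP[f0 _] := f01 x.
  by case: (boolP (x \in B)) => // /set_mem /(fB x Ix) ->.
have := cvgr_gt _ (cvg_Rintegral01_comp_CK H_dense near_meas z_cvg fCK f1) _
  (lt_le_trans gap lbB).
move=> near_gt; near=> t => Pt.
have tI : 0 < t <= T.
  by apply/andP; split; near: t; [exact: nbhs_right_gt | exact: nbhs_right_le].
have : Rintegral mu I01 (\1_A : R -> R) < Rintegral mu I01 (fun v => f (z v t)).
  by near: t; exact: near_gt.
rewrite ltNge => /negP; apply.
apply: (le_Rintegral01 _ _ (fun=> f1 _) (ind1 A)).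
- exact: measurableT_comp mf (measurable_fun_nondecreasing01 (z_mono tI)).
- exact: measurable_indic.
move=> v Iv; rewrite indicE; have /andP[_ f_le1] := f01 (z v t).
case: (boolP (v \in A)) => // /negP vA.
by rewrite (fA t tI Pt v Iv) // => Av; apply: vA; exact/mem_set.
Unshelve. all: by end_near.
Qed.

Lemma eventually_lt_add u e : 0 < u < 1 -> 0 < e -> \forall t \near 0^'+, z u t < u + e.
Proof.
move=> /andP[u0 u1] e0; pose d := Num.min e (1 - u) / 2.
have d0 : 0 < d by rewrite divr_gt0 // lt_min e0 subr_gt0.
have de : d <= e / 2 by rewrite ler_pM2r // ge_min lexx.
have du : d <= (1 - u) / 2 by rewrite ler_pM2r // ge_min lexx orbT.
have : \forall t \near 0^'+, ~ (u + e <= z u t).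
  apply: (@eventually_not_of_mass_gap (trapezoid (- d) (u + e) d) `[0, u[ `[0, u + d]).
  - exact: CK_trapezoid.
  - by move=> x; rewrite trapezoid_ge0 trapezoid_le1.
  - by [].
  - by [].
  - move=> x _; rewrite /= in_itv /= => /andP[x0 xud].
    by apply: trapezoid_eq1 => //; lra.
  - move=> t tI zu v; rewrite /= !in_itv /= => /andP[v0 v1] vu.
    apply: trapezoid_eq0 => //; right; apply: le_trans zu (z_mono tI (ltW u0) _ v1).
    by rewrite leNgt; apply/negP => vltu; apply: vu; rewrite v0.
  - by rewrite !Rintegral01_indic_itv //; lra.
by apply: filterS => t; rewrite ltNge => /negP.
Qed.

Lemma eventually_gt_sub u e : 0 < u < 1 -> 0 < e -> \forall t \near 0^'+, u - e < z u t.
Proof.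
move=> /andP[u0 u1] e0; pose d := Num.min e u / 2.
have d0 : 0 < d by rewrite divr_gt0 // lt_min e0 u0.
have de : d <= e / 2 by rewrite ler_pM2r // ge_min lexx.
have du : d <= u / 2 by rewrite ler_pM2r // ge_min lexx orbT.
have : \forall t \near 0^'+, ~ (z u t <= u - e).
  apply: (@eventually_not_of_mass_gap (trapezoid (u - e) (1 + d) d) `]u, 1] `[u - d, 1]).
  - exact: CK_trapezoid.
  - by move=> x; rewrite trapezoid_ge0 trapezoid_le1.
  - by [].
  - by [].
  - move=> x _; rewrite /= in_itv /= => /andP[xud x1].
    by apply: trapezoid_eq1 => //; lra.
  - move=> t tI zu v; rewrite /= !in_itv /= => /andP[v0 v1] vu.
    apply: trapezoid_eq0 => //; left; apply: le_trans (z_mono tI v0 _ (ltW u1)) zu.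
    by rewrite leNgt; apply/negP => ultv; apply: vu; rewrite ultv.
  - by rewrite !Rintegral01_indic_itv //; lra.
by apply: filterS => t; rewrite ltNge => /negP.
Qed.

Lemma cvg_interior u : 0 < u < 1 -> z u t @[t --> 0^'+] --> u.
Proof.
move=> uI; apply/cvgrPdist_lt => e e0.
apply: filterS2 (eventually_lt_add uI e0) (eventually_gt_sub uI e0) => t ? ?.
by rewrite ltr_norml; apply/andP; split; lra.
Qed.

End InteriorConvergence.

Section MonotoneUniform.
Variable R : realType.

Lemma nondecreasing_cvg_id_uniform (F : set_system R) {FF : Filter F}
    (z : R -> R -> R) :
  (\forall t \near F, forall u v, 0 <= u -> u <= v -> v <= 1 -> z u t <= z v t) ->
  (forall u, 0 <= u <= 1 -> z u t @[t --> F] --> u) ->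
  forall e : R, 0 < e -> \forall t \near F, forall u, 0 <= u <= 1 -> `|z u t - u| < e.
Proof.
move=> zmono zcvg e e0.
pose N := (Num.truncn (2 / e)).+1.
have N0 : (0 < N%:R :> R) by rewrite ltr0n.
have invN : N%:R^-1 < e / 2.
  have : 2 / e < N%:R by rewrite /N -truncn_lt_nat ?ltnSn // divr_ge0 ?ltW.
  rewrite ltr_pdivrMr // -(@ltr_pM2l _ N%:R) // mulfV ?gt_eqF //; nra.
pose grid (i : 'I_N.+1) : R := i%:R / N%:R.
have grid01 i : 0 <= grid i <= 1.
  by rewrite /grid divr_ge0 ?ler0n //= ler_pdivrMr // mul1r ler_nat -ltnS.
have bracket u : 0 <= u <= 1 -> exists i j : 'I_N.+1,
    [/\ grid i <= u, u <= grid j & grid j - grid i <= N%:R^-1].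
  move=> /andP[u0 u1]; have [ult1|u_ge1] := ltP u 1; last first.
    exists ord_max, ord_max; rewrite /grid /= divff ?gt_eqF // subrr invr_ge0.
    by split; lra.
  pose k := Num.truncn (u * N%:R).
  have uN0 : 0 <= u * N%:R := mulr_ge0 u0 (ler0n _ _).
  have kN : (k < N)%N by rewrite truncn_lt_nat //; nra.
  have kS : u * N%:R < k.+1%:R by rewrite -truncn_le_nat.
  exists (inord k), (inord k.+1); have kN1 : (k < N.+1)%N := ltnW kN.
  have kSN1 : (k.+1 < N.+1)%N := kN.
  rewrite /grid !inordK //.
  split; first by rewrite ler_pdivrMr // /k truncn_le.
    by rewrite ler_pdivlMr // ltW.
  by rewrite -mulrBl -natr1 addrAC subrr add0r mul1r.
have near_grid : \forall t \near F, forall i, `|z (grid i) t - grid i| < e / 2.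
  apply: filter_forall => i.
  have /cvgrPdist_lt /(_ (e / 2)) := zcvg _ (grid01 i).
  by rewrite divr_gt0 // => /(_ isT); apply: filterS => t; rewrite distrC.
near=> t.
have mono : forall u v, 0 <= u -> u <= v -> v <= 1 -> z u t <= z v t.
  by near: t; exact: zmono.
have close : forall i, `|z (grid i) t - grid i| < e / 2 by near: t; exact: near_grid.
move=> u uI; have [i [j [iu uj ji]]] := bracket u uI.
have /andP[i0 i1] := grid01 i; have /andP[j0 j1] := grid01 j.
have /andP[u0 u1] := uI.
have := mono _ _ i0 iu u1; have := mono _ _ u0 uj j1.
move: (close i) (close j); rewrite !ltr_norml => /andP[? ?] /andP[? ?] ? ?.
apply/andP; split; lra.
Unshelve. all: by end_near.
Qed.

End MonotoneUniform.

Section ExtensionAtZero.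
Variable R : realType.

Lemma near_at_right0_bound (T : R) (P : R -> Prop) : 0 < T ->
  (\forall t \near 0^'+, P t) ->
  exists2 a : R, 0 < a <= T & forall t, 0 < t < a -> P t.
Proof.
move=> T0; rewrite near_withinE => /nbhs_ballP[d /= d0 hd].
exists (Num.min d T); first by rewrite lt_min d0 T0 ge_min lexx orbT.
move=> t /andP[t0]; rewrite lt_min => /andP[td _]; apply: hd => //.
by rewrite /ball /= sub0r normrN gtr0_norm.
Qed.

Lemma within_continuous_ballP (A : set R) (f : R -> R) :
  {within A, continuous f} <-> forall x, A x -> forall e : R, 0 < e ->
    exists2 d : R, 0 < d & forall y, A y -> `|x - y| < d -> `|f x - f y| < e.
Proof.
rewrite subspace_continuousP; split => [fc x Ax e e0|fc x Ax].
  have /cvgrPdist_lt /(_ e e0) := fc x Ax.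
  by rewrite near_withinE => /nbhs_ballP[d /= d0 hd]; exists d => // y Ay xy; apply: hd.
apply/cvgrPdist_lt => e e0; rewrite near_withinE; apply/nbhs_ballP.
by have [d d0 hd] := fc x Ax e e0; exists d => // y xy Ay; exact: hd.
Qed.

Lemma continuous_extension_at0 (T c : R) (f : R -> R) :
  {within `]0, T], continuous f} -> f t @[t --> 0^'+] --> c ->
  {within `[0, T], continuous (fun t => if t == 0 then c else f t)}.
Proof.
move=> fc fc0; apply/within_continuous_ballP => x; rewrite /= in_itv /=.
move=> /andP[x0 xT] e e0; have [->|xn0] := eqVneq x 0.
  have /cvgrPdist_lt /(_ e e0) := fc0.
  rewrite near_withinE => /nbhs_ballP[d /= d0 hd].
  exists d => // y; rewrite /= in_itv /= => /andP[y0 _].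
  have [->|yn0] := eqVneq y 0; first by move=> _; rewrite subrr normr0.
  rewrite sub0r normrN ger0_norm // => yd.
  apply: hd; last by rewrite lt_neqAle eq_sym yn0.
  by rewrite /ball /= sub0r normrN ger0_norm.
have xp : 0 < x by rewrite lt_neqAle eq_sym xn0.
have [|d d0 hd] := (within_continuous_ballP _ _).1 fc x _ e e0.
  by rewrite /= in_itv /= xp.
exists (Num.min d x); first by rewrite lt_min d0 xp.
move=> y; rewrite /= in_itv /= => /andP[_ yT]; rewrite lt_min => /andP[yd yx].
have yp : 0 < y by move: yx; rewrite ltr_norml => /andP[_ ?]; lra.
by rewrite gt_eqF //; apply: hd; rewrite //= in_itv /= yp.
Qed.

End ExtensionAtZero.

Section ExtensionByIdentity.
Variables (R : realType) (T : R) (z : R -> R -> R).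
Hypotheses (T0 : 0 < T) (zD : in_D_C0T T z).
Hypothesis z_unif : forall {e : R}, 0 < e ->
  \forall t \near 0^'+, forall u, 0 <= u <= 1 -> `|z u t - u| < e.

Lemma ext0_continuous u : 0 <= u <= 1 -> {within `[0, T], continuous (ext0 z u)}.
Proof.
move=> uI; apply: continuous_extension_at0; first exact: zD.1.
apply/cvgrPdist_lt => e e0; apply: filterS _ (z_unif e0) => t /(_ u uI).
by rewrite distrC.
Qed.

Lemma ext0_right_continuous u : 0 <= u < 1 -> forall e : R, 0 < e ->
  exists2 d : R, 0 < d & forall v, u < v < u + d -> v <= 1 ->
    forall t, 0 <= t <= T -> `|ext0 z v t - ext0 z u t| < e.
Proof.
move=> uI e e0; have /andP[u0 u1] := uI.
have e3 : 0 < e / 3 by rewrite divr_gt0.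
have [a aI close] := near_at_right0_bound T0 (z_unif e3).
have [d d0 hd] := zD.2.1 u uI a aI e e0.
exists (Num.min d (e / 3)); first by rewrite lt_min d0 e3.
have md : Num.min d (e / 3) <= d by rewrite ge_min lexx.
have me : Num.min d (e / 3) <= e / 3 by rewrite ge_min lexx orbT.
move=> v /andP[uv vud] v1 t /andP[t0 tT]; rewrite /ext0.
have [_|tn0] := eqVneq t 0; first by rewrite ltr_norml; apply/andP; split; lra.
have [at_|ta] := leP a t; first by apply: hd => //; [rewrite uv; lra | rewrite at_].
have tI : 0 < t < a by rewrite lt_neqAle eq_sym tn0 t0 ta.
have vI : 0 <= v <= 1 by rewrite v1 andbT ltW // (le_lt_trans u0 uv).
have uI' : 0 <= u <= 1 by rewrite u0 ltW.
move: (close t tI v vI) (close t tI u uI'); rewrite !ltr_norml.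
by move=> /andP[? ?] /andP[? ?]; apply/andP; split; lra.
Qed.

Lemma left_limit_cvg_at0 u (g : R -> R) : 0 < u <= 1 ->
  (forall a, 0 < a <= T -> forall e : R, 0 < e ->
     exists2 d : R, 0 < d & forall v, u - d < v < u -> 0 <= v ->
       forall t, a <= t <= T -> `|z v t - g t| < e) ->
  g t @[t --> 0^'+] --> u.
Proof.
move=> /andP[u0 u1] gl; apply/cvgrPdist_lt => e e0.
have e3 : 0 < e / 3 by rewrite divr_gt0.
near=> t.
have t0 : 0 < t by near: t; exact: nbhs_right_gt.
have tT : t <= T by near: t; exact: nbhs_right_le.
have close : forall w, 0 <= w <= 1 -> `|z w t - w| < e / 3.
  by near: t; exact: z_unif.
have [d d0 hd] := gl t (introT andP (conj t0 tT)) (e / 3) e3.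
pose m := Num.min d (Num.min u (e / 3)).
have m0 : 0 < m by rewrite !lt_min d0 u0 e3.
have [md mu me] : [/\ m <= d, m <= u & m <= e / 3] by rewrite !ge_min !lexx !orbT.
have vI : 0 <= u - m / 2 <= 1 by apply/andP; split; lra.
have hv : `|z (u - m / 2) t - g t| < e / 3.
  by apply: hd; [apply/andP; split; lra | lra | rewrite lexx tT].
move: hv (close _ vI); rewrite !ltr_norml => /andP[? ?] /andP[? ?].
apply/andP; split; lra.
Unshelve. all: by end_near.
Qed.

Lemma ext0_left_limit u : 0 < u <= 1 -> exists g : R -> R,
  {within `[0, T], continuous g} /\ forall e : R, 0 < e ->
    exists2 d : R, 0 < d & forall v, u - d < v < u -> 0 <= v ->
      forall t, 0 <= t <= T -> `|ext0 z v t - g t| < e.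
Proof.
move=> uI; have /andP[u0 u1] := uI.
have [g [gc gl]] := zD.2.2 u uI.
have g0 := left_limit_cvg_at0 uI gl.
exists (fun t => if t == 0 then u else g t).
split; first exact: continuous_extension_at0.
move=> e e0; have e3 : 0 < e / 3 by rewrite divr_gt0.
have near_small : \forall t \near 0^'+,
    (forall w, 0 <= w <= 1 -> `|z w t - w| < e / 3) /\ `|u - g t| < e / 3.
  by apply/near_andP; split; [exact: z_unif | exact: (cvgrPdist_lt _ _).1 g0 _ e3].
have [a aI small] := near_at_right0_bound T0 near_small.
have [d d0 hd] := gl a aI e e0.
exists (Num.min d (e / 3)); first by rewrite lt_min d0 e3.
have md : Num.min d (e / 3) <= d by rewrite ge_min lexx.
have me : Num.min d (e / 3) <= e / 3 by rewrite ge_min lexx orbT.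
move=> v /andP[vu1 vu] v0 t /andP[t0 tT]; rewrite /ext0.
have [_|tn0] := eqVneq t 0; first by rewrite ltr_norml; apply/andP; split; lra.
have [at_|ta] := leP a t.
  by apply: hd; [apply/andP; split; lra | done | rewrite at_ tT].
have tI : 0 < t < a by rewrite lt_neqAle eq_sym tn0 t0 ta.
have vI : 0 <= v <= 1 by rewrite v0 ltW // (lt_le_trans vu u1).
have [/(_ v vI) + +] := small t tI; rewrite !ltr_norml => /andP[? ?] /andP[? ?].
apply/andP; split; lra.
Qed.

Lemma ext0_in_D_CT : in_D_CT T (ext0 z).
Proof.
split; first exact: ext0_continuous.
by split; [exact: ext0_right_continuous | exact: ext0_left_limit].
Qed.

End ExtensionByIdentity.

Theorem lemma2p8 (R : realType) (T : R) (H : set (R -> R)) (z : R -> R -> R) :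
  0 < T ->
  dense_in_CK H ->
  in_D_C0T T z ->
  (forall u v, 0 <= u -> u < v -> v <= 1 ->
     forall t, 0 < t <= T -> z u t <= z v t) ->
  (forall phi, H phi ->
     Rintegral lebesgue_measure `[0, 1] (fun u => phi (z u t)) @[t --> 0^'+]
       --> Rintegral lebesgue_measure `[0, 1] phi) ->
  (forall u, 0 < u < 1 -> (z u t @[t --> 0^'+] --> u)) /\
  ((z 0 t @[t --> 0^'+] --> (0:R)) -> (z 1 t @[t --> 0^'+] --> (1:R)) ->
     in_D_CT T (ext0 z)).
Proof.
move=> T0 H_dense zD z_mono_lt z_cvg.
have z_mono t : 0 < t <= T -> forall u v, 0 <= u -> u <= v -> v <= 1 -> z u t <= z v t.
  move=> tI u v u0; rewrite le_eqVlt => /orP[/eqP <- //|uv] v1; exact: z_mono_lt.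
have interior := cvg_interior T0 H_dense z_mono z_cvg.
split => // z0 z1.
have z_cvg01 u : 0 <= u <= 1 -> z u t @[t --> 0^'+] --> u.
  case/andP; rewrite le_eqVlt => /orP[/eqP <- //|u0].
  rewrite le_eqVlt => /orP[/eqP -> //|u1].
  by apply: interior; rewrite u0.
apply: ext0_in_D_CT => // e e0; apply: nondecreasing_cvg_id_uniform => //.
near=> t; apply: z_mono; apply/andP; split.
  by near: t; exact: nbhs_right_gt.
by near: t; exact: nbhs_right_le.
Unshelve. all: by end_near.
Qed.
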